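(* Let $\mathcal X=\mathcal X_1\times\cdots\times\mathcal X_b$, $\mathcal X_i=\mathbb R^{m_i\times n_i}$ with trace inner product and norms $\|\cdot\|_{(i)}$ (dual $\|\cdot\|_{(i)\star}$). Let $f$ be continuously differentiable and let $\mathcal D$ be a distribution on subsets of $[b]$. Assume constants $L^0_{i,S},L^1_{i,S}\ge0$ exist such that for all $S\in\operatorname{supp}(\mathcal D)$, $i\in S$, $X\in\mathcal X$ and $\Gamma$ with $\Gamma_j=0$ for $j\notin S$: $\|\nabla_if(X+\Gamma)-\nabla_if(X)\|_{(i)\star}\le(L^0_{i,S}+L^1_{i,S}\|\nabla_if(X)\|_{(i)\star})\|\Gamma_i\|_{(i)}$. Let $S^k\in\operatorname{supp}(\mathcal D)$, $X^k,M^k\in\mathcal X$, $t_i^k>0$, and define $X^{k+1}$ by $X_i^{k+1}=\operatorname{lmo}_{\mathcal B_i(X_i^k,t_i^k)}(M_i^k)$ for $i\in S^k$ and $X_i^{k+1}=X_i^k$ for $i\notin S^k$. Then $$f(X^{k+1})\le f(X^k)+\sum_{i\in S^k}2t_i^k\|\nabla_if(X^k)-M_i^k\|_{(i)\star}-\sum_{i\in S^k}t_i^k\|\nabla_if(X^k)\|_{(i)\star}+\sum_{i\in S^k}\frac{L^0_{i,S^k}+L^1_{i,S^k}\|\nabla_if(X^k)\|_{(i)\star}}2(t_i^k)^2.$$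
   Context: $\mathcal B_i(Y,t)=\{Z\in\mathcal X_i:\|Z-Y\|_{(i)}\le t\}$ and $\operatorname{lmo}_{\mathcal B}(M)\in\arg\min_{Z\in\mathcal B}\langle M,Z\rangle$. $\operatorname{supp}(\mathcal D)$ is the set of subsets of $[b]$ with positive probability. *)

From mathcomp Require Import all_boot all_order all_algebra.
From mathcomp Require Import boolp classical_sets reals.
Set Implicit Arguments. Unset Strict Implicit. Unset Printing Implicit Defensive.
Import Order.TTheory GRing.Theory Num.Theory.
Local Open Scope ring_scope.
Local Open Scope classical_set_scope.

Section Defs.
Variable R : realType.

Definition trip (p q : nat) (A B : 'M[R]_(p, q)) : R := \tr (A^T *m B).

Definition is_norm (p q : nat) (N : 'M[R]_(p, q) -> R) : Prop :=
  [/\ forall A, 0 <= N A,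
      forall A, N A = 0 -> A = 0,
      forall (a : R) A, N (a *: A) = `|a| * N A
    & forall A B, N (A + B) <= N A + N B].

Definition dualn (p q : nat) (N : 'M[R]_(p, q) -> R) (M : 'M[R]_(p, q)) : R :=
  sup [set trip M Z | Z in [set Z | N Z <= 1]].

Variables (b : nat) (m n : 'I_b -> nat).

Definition prodsp := forall i : 'I_b, 'M[R]_(m i, n i).

Definition padd (X Y : prodsp) : prodsp := fun i => X i + Y i.
Definition psub (X Y : prodsp) : prodsp := fun i => X i - Y i.

Definition pip (X Y : prodsp) : R := \sum_(i < b) trip (X i) (Y i).

(* an auxiliary reference norm on X (max-abs entry), used only to
   express differentiability / continuity (all norms are equivalent) *)
Definition pnorm (X : prodsp) : R :=
  \big[Num.max/0]_(i < b) \big[Num.max/0]_(r < m i) \big[Num.max/0]_(c < n i)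
     `|X i r c|.

Definition C1_with_grad (f : prodsp -> R) (G : prodsp -> prodsp) : Prop :=
  (forall X (eps : R), 0 < eps -> exists2 delta : R, 0 < delta &
     forall H, pnorm H < delta ->
       `|f (padd X H) - f X - pip (G X) H| <= eps * pnorm H)
  /\
  (forall X (eps : R), 0 < eps -> exists2 delta : R, 0 < delta &
     forall Y, pnorm (psub Y X) < delta -> pnorm (psub (G Y) (G X)) < eps).

Definition is_distr (D : {set 'I_b} -> R) : Prop :=
  (forall S, 0 <= D S) /\ \sum_(S : {set 'I_b}) D S = 1.

Definition supp (D : {set 'I_b} -> R) : set {set 'I_b} := [set S | 0 < D S].

End Defs.

(** Expand f along the segment from X^k to X^{k+1}: with Gamma = X^{k+1} - X^k,
    s |-> f (X^k + s Gamma) has derivative <grad f(X^k + s Gamma), Gamma>,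
    and the blockwise (L0, L1)-smoothness makes this derivative grow at most
    linearly in s, which integrates to the quadratic term.  The linear term
    <grad f(X^k), Gamma> is bounded block by block: since X_i^{k+1} minimises
    <M_i, .> over the ball of radius t_i, <M_i, X_i^k - X_i^{k+1}> >= t_i ||M_i||_*,
    and trading M_i for grad_i f(X^k) costs t_i ||grad_i f(X^k) - M_i||_* twice.
    Finite dimensionality enters only to make the dual norm a finite supremum. *)

From HB Require Import structures.
From mathcomp Require Import all_boot all_order all_algebra.
From mathcomp Require Import all_classical all_reals all_analysis.
From mathcomp Require Import ring lra.
Import Order.TTheory GRing.Theory Num.Theory.
Import numFieldNormedType.Exports.
Local Open Scope ring_scope.
Local Open Scope classical_set_scope.

Section Real.
Context {R : realType}.

Lemma is_derive_of_remainder_le (f : R -> R) (x df : R) :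
  (forall e, 0 < e -> exists2 del, 0 < del &
     forall h, `|h| < del -> `|f (x + h) - f x - h * df| <= e * `|h|) ->
  is_derive x 1 f df.
Proof.
move=> fdf.
have cvg_df : (fun h => h^-1 *: ((f \o shift x) (h *: 1) - f x)) @ 0^' --> df.
  apply/cvgrPdist_lt => e e0.
  have [del del0 hdel] := fdf (e / 2) ltac:(lra).
  near=> h.
  have h0 : h != 0 by near: h; exact: nbhs_dnbhs_neq.
  have /hdel : `|h| < del by near: h; exact: dnbhs0_lt.
  rewrite /= [h *: 1]mulr1 => hle.
  have hpos : 0 < `|h| by rewrite normr_gt0.
  rewrite -(ltr_pM2l hpos) -normrM mulrBr mulrA mulfV // mul1r.
  rewrite -normrN opprB [h + x]addrC; apply: le_lt_trans hle _.
  by rewrite mulrC ltr_pM2l //; lra.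
apply: DeriveDef; first by apply/cvg_ex; exists df.
exact: cvg_lim cvg_df.
Unshelve. all: by end_near.
Qed.

Lemma le_of_derive_le_affine {phi d : R -> R} {c K : R} :
  (forall s : R, is_derive s 1 phi (d s)) ->
  (forall s, 0 <= s <= 1 -> d s <= c + K * s) ->
  phi 1 <= phi 0 + c + K / 2.
Proof.
move=> dphi dle.
pose psi := phi - (c *: id + (K / 2) *: id ^+ 2).
have dpsi (s : R) : is_derive s 1 psi (d s - (c + K * s)).
  have dphi_s := dphi s. (* an instance for [is_derive_eq] to find *)
  apply: is_derive_eq.
  by rewrite /GRing.scale /= !mulr1 expr1; field.
have psi_cont : {within `[0, 1], continuous psi}.
  by apply: derivable_within_continuous => x _; exact: ex_derive.
have [x x01 psiE] := MVT_segment ler01 (fun x _ => dpsi x) psi_cont.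
have : psi 1 - psi 0 <= 0.
  by rewrite psiE subr0 mulr1 subr_le0 dle.
by rewrite /psi !fctE /= /GRing.scale /= !expr2 !mulr0 !mulr1; lra.
Qed.

End Real.

Section TraceInnerProduct.
Context {R : realType} {p q : nat}.
Implicit Types M Z : 'M[R]_(p, q).

Lemma tripE M Z : trip M Z = \sum_(k < q) \sum_(i < p) M i k * Z i k.
Proof.
rewrite /trip /mxtrace; apply: eq_bigr => k _; rewrite mxE.
by apply: eq_bigr => i _; rewrite mxE.
Qed.

Lemma tripZ M (a : R) Z : trip M (a *: Z) = a * trip M Z.
Proof. by rewrite /trip -scalemxAr mxtraceZ. Qed.

Lemma tripD M Z1 Z2 : trip M (Z1 + Z2) = trip M Z1 + trip M Z2.
Proof. by rewrite /trip mulmxDr mxtraceD. Qed.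

Lemma tripN M Z : trip M (- Z) = - trip M Z.
Proof. by rewrite -scaleN1r tripZ mulN1r. Qed.

Lemma trip0 M : trip M 0 = 0.
Proof. by rewrite -(scale0r 0) tripZ mul0r. Qed.

Lemma tripBl M1 M2 Z : trip (M1 - M2) Z = trip M1 Z - trip M2 Z.
Proof. by rewrite /trip linearB /= mulmxBl linearB. Qed.

End TraceInnerProduct.

Section Norm.
Context {R : realType} {p q : nat} {N : 'M[R]_(p, q) -> R}.
Hypothesis normN : is_norm N.
Implicit Types A M Z : 'M[R]_(p, q).

Lemma nrm_ge0 A : 0 <= N A.
Proof. by case: normN. Qed.

Lemma nrm_eq0 A : N A = 0 -> A = 0.
Proof. by case: normN => _ N_eq0 _ _; exact: N_eq0. Qed.

Lemma nrmZ (a : R) A : N (a *: A) = `|a| * N A.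
Proof. by case: normN. Qed.

Lemma nrmD A1 A2 : N (A1 + A2) <= N A1 + N A2.
Proof. by case: normN. Qed.

Lemma nrm0 : N 0 = 0.
Proof. by rewrite -(scale0r 0) nrmZ normr0 mul0r. Qed.

Lemma nrmN A : N (- A) = N A.
Proof. by rewrite -scaleN1r nrmZ normrN normr1 mul1r. Qed.

Lemma nrm_sum {I : Type} (r : seq I) (P : pred I) (F : I -> 'M[R]_(p, q)) :
  N (\sum_(i <- r | P i) F i) <= \sum_(i <- r | P i) N (F i).
Proof.
elim/big_rec2: _ => [|i y A _ hA]; first by rewrite nrm0.
exact: le_trans (nrmD _ _) (lerD _ hA).
Qed.

Lemma nrm_dist A1 A2 : `|N A1 - N A2| <= N (A1 - A2).
Proof.
have h1 : N A1 <= N A2 + N (A1 - A2).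
  by apply: le_trans (nrmD _ _); rewrite addrC subrK.
have h2 : N A2 <= N A1 + N (A1 - A2).
  by rewrite -(nrmN (A1 - A2)) opprB; apply: le_trans (nrmD _ _); rewrite addrC subrK.
rewrite ler_norml; apply/andP; split; lra.
Qed.

Let Nv (v : 'rV[R]_(p * q)) := N (vec_mx v).

Lemma nrm_vec_le v : Nv v <= `|v| * \sum_(j < p * q) Nv (delta_mx 0 j).
Proof.
rewrite /Nv {1}(matrix_sum_delta v) big_ord1 linear_sum /=.
apply: le_trans (nrm_sum _ _ _) _; rewrite mulr_sumr; apply: ler_sum => j _.
rewrite linearZ /= nrmZ ler_wpM2r ?nrm_ge0 //.
rewrite -[`|v|]/(mx_norm v) mx_normrE.
by apply/bigmax_geP; right; exists (0, j).
Qed.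

Lemma nrm_vec_continuous : continuous Nv.
Proof.
move=> v; apply/(@cvgrPdist_lt _ _ _ (nbhs v) (nbhs_filter v)) => e e0.
set C := \sum_(j < p * q) Nv (delta_mx 0 j).
have C0 : 0 <= C by apply: sumr_ge0 => j _; exact: nrm_ge0.
have eC : 0 < e / (C + 1) by rewrite divr_gt0 // ltr_wpDl.
near=> w.
have vw : `|v - w| < e / (C + 1) by near: w; exact: (cvgrPdist_lt _ _).1 cvg_id _ eC.
apply: le_lt_trans (nrm_dist _ _) _; rewrite -linearB.
apply: le_lt_trans (nrm_vec_le _) _; rewrite -/C.
apply: le_lt_trans (_ : `|v - w| * (C + 1) < e); last by rewrite -ltr_pdivlMr // ltr_wpDl.
by rewrite ler_wpM2l // lerDl.
Unshelve. all: by end_near.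
Qed.

Lemma nrm_vec_sphere_ge : exists2 c, 0 < c & forall v, `|v| = 1 -> c <= Nv v.
Proof.
set S := [set v : 'rV[R]_(p * q) | `|v| = 1].
have [S0|Sempty] := pselect (S !=set0); last first.
  by exists 1 => // v v1; exfalso; apply: Sempty; exists v.
have Sc : compact S.
  apply: bounded_closed_compact.
    exists 1; split; first by rewrite realE ler01.
    by move=> c c1 v /= ->; exact: ltW.
  have -> : S = (fun v : 'rV[R]_(p * q) => `|v|) @^-1` [set 1] by [].
  by apply: (continuous_closedP _).1; [exact: norm_continuous | exact: closed_eq].
have [v0 v0S v0min] := compact_EVT_min S0 Sc (continuous_subspaceT nrm_vec_continuous).
exists (Nv v0); last by move=> v v1; apply: v0min; rewrite inE.
rewrite lt_neqAle nrm_ge0 andbT eq_sym; apply/eqP => /nrm_eq0 /(congr1 mxvec).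
rewrite vec_mxK linear0 => v00.
by move: v0S; rewrite inE /S /= v00 normr0 => /esym/eqP; rewrite oner_eq0.
Qed.

Lemma nrm_entry_le : exists2 c, 0 < c & forall Z i k, `|Z i k| <= c * N Z.
Proof.
have [c c0 cle] := nrm_vec_sphere_ge.
exists c^-1 => [|Z i k]; first by rewrite invr_gt0.
set v := mxvec Z.
have -> : Z i k = v 0 (mxvec_index i k) by rewrite mxvecE.
have vle : `|v 0 (mxvec_index i k)| <= `|v|.
  rewrite -[`|v|]/(mx_norm v) mx_normrE.
  by apply/bigmax_geP; right; exists (0, mxvec_index i k).
apply: le_trans vle _.
have [->|v0] := eqVneq v 0; first by rewrite normr0 mulr_ge0 ?nrm_ge0 // invr_ge0 ltW.
have nv0 : 0 < `|v| by rewrite normr_gt0.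
have := cle (`|v|^-1 *: v).
rewrite normrZ normfV normr_id mulVf ?gt_eqF // => /(_ erefl).
rewrite /Nv linearZ /= nrmZ /v mxvecK normfV normr_id.
by rewrite ler_pdivlMl // ler_pdivlMl // mulrC.
Qed.

Lemma dualn_has_sup M : has_sup [set trip M Z | Z in [set Z | N Z <= 1]].
Proof.
split; first by exists (trip M 0), 0; rewrite //= nrm0.
have [c c0 entry_le] := nrm_entry_le.
exists (\sum_(k < q) \sum_(i < p) `|M i k| * c) => _ [Z /= NZ <-].
rewrite tripE; apply: ler_sum => k _; apply: ler_sum => i _.
apply: le_trans (ler_norm _) _; rewrite normrM ler_wpM2l //.
by apply: le_trans (entry_le Z i k) _; rewrite ler_piMr // ltW.
Qed.

Lemma trip_le_dualn M Z : N Z <= 1 -> trip M Z <= dualn N M.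
Proof. by move=> NZ; apply: sup_upper_bound (dualn_has_sup M) _ _; exists Z. Qed.

Lemma dualn_ge0 M : 0 <= dualn N M.
Proof. by rewrite -(trip0 M) trip_le_dualn // nrm0. Qed.

Lemma trip_le_dualnM M Z : trip M Z <= dualn N M * N Z.
Proof.
have [/nrm_eq0 ->|NZ0] := eqVneq (N Z) 0; first by rewrite nrm0 trip0 mulr0.
have NZ : 0 < N Z by rewrite lt_neqAle eq_sym NZ0 nrm_ge0.
rewrite -ler_pdivrMr // mulrC -tripZ trip_le_dualn //.
by rewrite nrmZ ger0_norm ?invr_ge0 ?nrm_ge0 // mulVf.
Qed.

Lemma dualn_le M (x : R) : (forall Z, N Z <= 1 -> trip M Z <= x) -> dualn N M <= x.
Proof.
move=> Mle; apply: ge_sup; first by exists (trip M 0), 0; rewrite //= nrm0.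
by move=> _ [Z /= NZ <-]; exact: Mle.
Qed.

Lemma trip_lmo_step_le {g M X X1 : 'M[R]_(p, q)} {t : R} : 0 < t ->
  N (X1 - X) <= t ->
  (forall Z, N (Z - X) <= t -> trip M X1 <= trip M Z) ->
  trip g (X1 - X) <= 2 * t * dualn N (g - M) - t * dualn N g.
Proof.
move=> t0 X1_ball X1_min.
set D := dualn N (g - M).
have splitE : trip g (X1 - X) = trip (g - M) (X1 - X) + (trip M X1 - trip M X).
  rewrite tripBl !tripD !tripN; lra.
have gM_le : trip (g - M) (X1 - X) <= t * D.
  by apply: le_trans (trip_le_dualnM _ _) _; rewrite mulrC ler_wpM2r ?dualn_ge0.
have g_le : dualn N g <= (trip M X - trip M X1) / t + D.
  apply: dualn_le => Z NZ.
  have Z_ball : N (X - t *: Z - X) <= t.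
    rewrite addrC addKr nrmN nrmZ gtr0_norm //.
    by rewrite -[leRHS]mulr1 ler_wpM2l // ltW.
  have := X1_min _ Z_ball; rewrite tripD tripN tripZ => M_le.
  have := trip_le_dualn (g - M) _ NZ; rewrite tripBl -/D.
  have : trip M Z <= (trip M X - trip M X1) / t by rewrite ler_pdivlMr // mulrC; lra.
  lra.
have := ler_wpM2l (ltW t0) g_le.
rewrite mulrDr mulrCA mulfV ?gt_eqF // mulr1.
lra.
Qed.

End Norm.

Section ProductSpace.
Context {R : realType} {b : nat} {m n : 'I_b -> nat}.
Local Notation P := (prodsp R m n).
Implicit Types X Y : P.

Definition pscale (s : R) X : P := fun i => s *: X i.

Lemma pnorm_ge0 X : 0 <= pnorm X.
Proof.
have max_ge0 (x y : R) : 0 <= x -> 0 <= y -> 0 <= Num.max x y.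
  by move=> x0 _; rewrite le_max x0.
have ind := big_ind (fun x : R => 0 <= x) (lexx 0) max_ge0.
by apply: (ind) => i _; apply: (ind) => r _; apply: (ind).
Qed.

Lemma pnorm_ge_entry X i r c : `|X i r c| <= pnorm X.
Proof.
apply: le_trans (le_bigmax _ _ i); apply: le_trans (le_bigmax _ _ r).
exact: (le_bigmax _ (fun c => `|X i r c|) c).
Qed.

Lemma pnorm_scale (h : R) X : pnorm (pscale h X) <= `|h| * pnorm X.
Proof.
have hX0 : 0 <= `|h| * pnorm X by rewrite mulr_ge0 // pnorm_ge0.
apply: bigmax_le => // i _; apply: bigmax_le => // r _; apply: bigmax_le => // c _.
by rewrite mxE normrM ler_wpM2l // pnorm_ge_entry.
Qed.

Lemma pip_scale X Y (h : R) : pip X (pscale h Y) = h * pip X Y.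
Proof. by rewrite /pip mulr_sumr; apply: eq_bigr => i _; exact: tripZ. Qed.

Lemma pip_supported X Y (S : {set 'I_b}) : (forall j, j \notin S -> Y j = 0) ->
  pip X Y = \sum_(i in S) trip (X i) (Y i).
Proof.
move=> Y_out; rewrite /pip (bigID (mem S)) /= [X in _ + X]big1 ?addr0 // => i iS.
by rewrite Y_out // trip0.
Qed.

Lemma padd_pscaleD X Y (s h : R) :
  padd (padd X (pscale s Y)) (pscale h Y) = padd X (pscale (s + h) Y).
Proof.
by apply: functional_extensionality_dep => i; rewrite /padd /pscale scalerDl addrA.
Qed.

End ProductSpace.

Definition block_smooth {R : realType} {b : nat} {m n : 'I_b -> nat}
    (nrm : forall i : 'I_b, 'M[R]_(m i, n i) -> R) (G : prodsp R m n -> prodsp R m n)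
    (S : {set 'I_b}) (L0 L1 : 'I_b -> R) : Prop :=
  forall i, i \in S -> forall X Gam : prodsp R m n, (forall j, j \notin S -> Gam j = 0) ->
    dualn (nrm i) (G (padd X Gam) i - G X i)
      <= (L0 i + L1 i * dualn (nrm i) (G X i)) * nrm i (Gam i).

Section Segment.
Context {R : realType} {b : nat} {m n : 'I_b -> nat}.
Local Notation P := (prodsp R m n).
Context {G : P -> P} (X Gam : P).

Lemma C1_is_derive_segment {f : P -> R} : C1_with_grad f G -> forall s : R,
  is_derive s 1 (fun s => f (padd X (pscale s Gam)))
    (pip (G (padd X (pscale s Gam))) Gam).
Proof.
case=> f_diff _ s; apply: is_derive_of_remainder_le => e e0.
set Y := padd X (pscale s Gam).
pose c := pnorm Gam + 1.
have c0 : 0 < c by rewrite ltr_wpDl // pnorm_ge0.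
have [del del0 Y_diff] := f_diff Y (e / c) (divr_gt0 e0 c0).
exists (del / c) => [|h hdel]; first by rewrite divr_gt0.
have hGam_small : pnorm (pscale h Gam) < del.
  apply: le_lt_trans (pnorm_scale _ _) _.
  apply: le_lt_trans (_ : `|h| * c < del); last by rewrite -ltr_pdivlMr.
  by rewrite ler_wpM2l // lerDl.
have := Y_diff _ hGam_small; rewrite padd_pscaleD pip_scale.
move/le_trans; apply; apply: le_trans (_ : e / c * (`|h| * c) <= _).
  apply: ler_wpM2l; first by rewrite ltW ?divr_gt0.
  by apply: le_trans (pnorm_scale _ _) _; rewrite ler_wpM2l // lerDl.
by rewrite mulrCA divfK ?gt_eqF // mulrC.
Qed.

Lemma grad_segment_le (nrm : forall i : 'I_b, 'M[R]_(m i, n i) -> R) (S : {set 'I_b}) (L0 L1 t : 'I_b -> R) (s : R) :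
  (forall i, is_norm (nrm i)) -> block_smooth nrm G S L0 L1 ->
  (forall i, 0 <= L0 i) -> (forall i, 0 <= L1 i) ->
  (forall j, j \notin S -> Gam j = 0) -> (forall i, i \in S -> nrm i (Gam i) <= t i) ->
  0 <= s ->
  pip (G (padd X (pscale s Gam))) Gam <= pip (G X) Gam
    + (\sum_(i in S) (L0 i + L1 i * dualn (nrm i) (G X i)) * t i ^+ 2) * s.
Proof.
move=> hnorm smooth L0_ge0 L1_ge0 Gam_out Gam_le s0.
have sGam_out j : j \notin S -> pscale s Gam j = 0.
  by move=> jS; rewrite /pscale Gam_out ?scaler0.
rewrite !(pip_supported _ _ _ Gam_out) mulr_suml -big_split /=; apply: ler_sum => i iS.
rewrite -lerBlDl -tripBl.
apply: le_trans (trip_le_dualnM (hnorm i) _ _) _.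
have := smooth i iS X _ sGam_out; rewrite /pscale (nrmZ (hnorm i)) ger0_norm //.
set Lc := L0 i + _; set u := nrm i (Gam i); set w := dualn _ _ => w_le.
have Lc0 : 0 <= Lc by rewrite addr_ge0 ?mulr_ge0 ?(dualn_ge0 (hnorm i)).
have u0 : 0 <= u by exact: nrm_ge0 (hnorm i) _.
have ut := Gam_le i iS.
apply: le_trans (_ : Lc * s * (u * u) <= _).
  by rewrite mulrA; apply: ler_wpM2r; rewrite // -mulrA.
rewrite [Lc * _ ^+ 2 * s]mulrAC expr2.
by apply: ler_wpM2l; [exact: mulr_ge0 | exact: ler_pM].
Qed.

End Segment.

Theorem lemma6 (R : realType) (b : nat) (m n : 'I_b -> nat)
  (nrm : forall i : 'I_b, 'M[R]_(m i, n i) -> R)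
  (f : prodsp R m n -> R) (G : prodsp R m n -> prodsp R m n)
  (D : {set 'I_b} -> R)
  (L0 L1 : 'I_b -> {set 'I_b} -> R)
  (Sk : {set 'I_b}) (Xk Mk Xk1 : prodsp R m n) (t : 'I_b -> R) :
  (forall i, is_norm (nrm i)) ->
  C1_with_grad f G ->
  is_distr D ->
  (forall i S, 0 <= L0 i S) -> (forall i S, 0 <= L1 i S) ->
  (forall S, S \in supp D -> forall i, i \in S ->
     forall (X Gam : prodsp R m n), (forall j, j \notin S -> Gam j = 0) ->
       dualn (nrm i) (G (padd X Gam) i - G X i)
         <= (L0 i S + L1 i S * dualn (nrm i) (G X i)) * nrm i (Gam i)) ->
  Sk \in supp D ->
  (forall i, 0 < t i) ->
  (forall i, i \in Sk ->
     nrm i (Xk1 i - Xk i) <= t i /\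
     (forall Z, nrm i (Z - Xk i) <= t i -> trip (Mk i) (Xk1 i) <= trip (Mk i) Z)) ->
  (forall i, i \notin Sk -> Xk1 i = Xk i) ->
  f Xk1 <= f Xk
           + \sum_(i in Sk) 2 * t i * dualn (nrm i) (G Xk i - Mk i)
           - \sum_(i in Sk) t i * dualn (nrm i) (G Xk i)
           + \sum_(i in Sk) (L0 i Sk + L1 i Sk * dualn (nrm i) (G Xk i)) / 2 * t i ^+ 2.
Proof.
move=> hnorm hC1 _ L0_ge0 L1_ge0 smooth Sk_supp t_gt0 lmo lmo_out.
pose Gam := psub Xk1 Xk.
have Gam_out j : j \notin Sk -> Gam j = 0.
  by move/lmo_out; rewrite /Gam /psub => ->; rewrite subrr.
have Gam_le i : i \in Sk -> nrm i (Gam i) <= t i by case/lmo.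
have seg0 : padd Xk (pscale 0 Gam) = Xk.
  by apply: functional_extensionality_dep => i; rewrite /padd /pscale scale0r addr0.
have seg1 : padd Xk (pscale 1 Gam) = Xk1.
  by apply: functional_extensionality_dep => i; rewrite /padd /pscale scale1r addrC subrK.
set K := \sum_(i in Sk) (L0 i Sk + L1 i Sk * dualn (nrm i) (G Xk i)) * t i ^+ 2.
have grad_le s : 0 <= s <= 1 ->
    pip (G (padd Xk (pscale s Gam))) Gam <= pip (G Xk) Gam + K * s.
  by case/andP => s0 _; apply: grad_segment_le hnorm (smooth Sk Sk_supp) _ _ Gam_out Gam_le s0.
have lin_le : pip (G Xk) Gam <= \sum_(i in Sk) 2 * t i * dualn (nrm i) (G Xk i - Mk i)
                                 - \sum_(i in Sk) t i * dualn (nrm i) (G Xk i).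
  rewrite (pip_supported _ _ _ Gam_out) -sumrB; apply: ler_sum => i iS.
  have [ball min] := lmo i iS.
  exact: (trip_lmo_step_le (hnorm i) (t_gt0 i) ball min).
have := le_of_derive_le_affine (C1_is_derive_segment Xk Gam hC1) grad_le.
have -> : K / 2 = \sum_(i in Sk) (L0 i Sk + L1 i Sk * dualn (nrm i) (G Xk i)) / 2 * t i ^+ 2.
  by rewrite /K mulr_suml; apply: eq_bigr => i _; rewrite mulrAC.
rewrite /= seg0 seg1; lra.
Qed.
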